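(* Let $\beta_U,\beta_H,\beta_R>0$ with $\beta_U+\beta_H+\beta_R=1$ and $\beta_U<\tfrac12$, and let $\gamma\ge 0$. For $x\in[0,1]$ define $p_m(x)=\beta_U(1-\beta_U-x\beta_R)^2$, $p_f(x)=\beta_U(\beta_U+x\beta_R)(\beta_U+x\beta_R+\beta_H)$ and $$E[R_r](x)=\frac{\beta_R}{\beta_R+\beta_H}p_m(x)+\frac{(1-x)\beta_R}{\beta_H+(1-x)\beta_R}\,2\gamma\,p_m(x)+\frac{x\beta_R}{x\beta_R+\beta_U}\,\gamma\,p_f(x)+\frac{x\beta_R}{x\beta_R+\beta_U+\beta_H}\,p_f(x).$$ Then $E[R_r](0)<E[R_r](1)$ if and only if $$\gamma<\frac{\frac{\beta_H^2}{1-\beta_U}+\beta_U-\beta_H}{1-2\beta_U}.$$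
   Context: Model of an undercutting attack with safe depth $D=2$ (the undercutter abandons its fork once it is two blocks behind). The undercutter has mining-power fraction $\beta_U$, honest miners have total $\beta_H$, and rational non-undercutting miners have total $\beta_R$. A fraction $x$ of the rational mining power moves to the fork when the fork ties the main chain. $p_m$ and $p_f$ approximate the probabilities that the main chain, respectively the fork, first leads by two blocks. Fees are normalized so the undercut block holds $1$, the subsequent main-chain blocks and the first two fork blocks hold $\gamma$, and the third fork block holds $1$. $E[R_r](x)$ is the rational miners' expected revenue. *)

From Stdlib Require Import Reals.
Open Scope R_scope.

Definition p_m (bU bH bR x : R) : R := bU * (1 - bU - x * bR) ^ 2.
Definition p_f (bU bH bR x : R) : R := bU * (bU + x * bR) * (bU + x * bR + bH).

Definition ERr (bU bH bR gamma x : R) : R :=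
  bR / (bR + bH) * p_m bU bH bR x
  + (1 - x) * bR / (bH + (1 - x) * bR) * (2 * gamma) * p_m bU bH bR x
  + x * bR / (x * bR + bU) * gamma * p_f bU bH bR x
  + x * bR / (x * bR + bU + bH) * p_f bU bH bR x.

(* At x = 0 the fork terms vanish and at x = 1 the second main-chain term does,
   so, using bU + bH + bR = 1, both endpoint revenues collapse to bR * bU times
   an affine function of gamma.  Their difference is
   bR * bU * (1 - 2 bU) * (threshold - gamma), whose first factors are positive. *)
From Stdlib Require Import Reals Lra.
Open Scope R_scope.

Definition undercut_threshold (bU bH : R) : R :=
  (bH ^ 2 / (1 - bU) + bU - bH) / (1 - 2 * bU).

Lemma ERr_at_0 (bU bH bR gamma : R) :
  bU + bH + bR = 1 -> bU <> 1 ->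
  ERr bU bH bR gamma 0 = bR * bU * (1 - bU) * (1 + 2 * gamma).
Proof.
  intros hsum hU.
  unfold ERr, p_m, p_f.
  rewrite !Rmult_0_l, !Rminus_0_r, !Rdiv_0_l, !Rmult_0_l, !Rmult_1_l, !Rplus_0_r.
  replace (bR + bH) with (1 - bU) by lra.
  replace (bH + bR) with (1 - bU) by lra.
  field. lra.
Qed.

Lemma ERr_at_1 (bU bH bR gamma : R) :
  bU + bH + bR = 1 -> bU <> 1 -> bH <> 1 ->
  ERr bU bH bR gamma 1 = bR * bU * (bH ^ 2 / (1 - bU) + gamma + 1 - bH).
Proof.
  intros hsum hU hH.
  unfold ERr, p_m, p_f.
  rewrite Rminus_diag, !Rmult_0_l, Rdiv_0_l, !Rmult_0_l, Rplus_0_r, !Rmult_1_l.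
  replace (bR + bH) with (1 - bU) by lra.
  replace (1 - bU - bR) with bH by lra.
  replace (bR + bU) with (1 - bH) by lra.
  replace (bU + bR) with (1 - bH) by lra.
  replace (1 - bH + bH) with 1 by lra.
  field. split; lra.
Qed.

Lemma ERr_1_sub_ERr_0 (bU bH bR gamma : R) :
  bU + bH + bR = 1 -> bU <> 1 -> bH <> 1 -> 1 - 2 * bU <> 0 ->
  ERr bU bH bR gamma 1 - ERr bU bH bR gamma 0
  = bR * bU * (1 - 2 * bU) * (undercut_threshold bU bH - gamma).
Proof.
  intros hsum hU hH hhalf.
  rewrite ERr_at_1, ERr_at_0 by assumption.
  unfold undercut_threshold.
  field. split; lra.
Qed.

Lemma Rmult_pos_iff_r (k y : R) : 0 < k -> (0 < k * y <-> 0 < y).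
Proof.
  intros hk; split; intros hy.
  - apply (Rmult_lt_reg_l k); [exact hk | now rewrite Rmult_0_r].
  - now apply Rmult_lt_0_compat.
Qed.

Theorem mainTheorem5 (bU bH bR gamma : R) :
  0 < bU -> 0 < bH -> 0 < bR -> bU + bH + bR = 1 -> bU < 1 / 2 -> 0 <= gamma ->
  (ERr bU bH bR gamma 0 < ERr bU bH bR gamma 1 <->
   gamma < (bH ^ 2 / (1 - bU) + bU - bH) / (1 - 2 * bU)).
Proof.
  intros hU hH hR hsum hhalf _.
  fold (undercut_threshold bU bH).
  rewrite <- Rlt_0_minus, <- (Rlt_0_minus gamma).
  rewrite ERr_1_sub_ERr_0 by lra.
  apply Rmult_pos_iff_r.
  apply Rmult_lt_0_compat; [apply Rmult_lt_0_compat |]; lra.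
Qed.
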